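(* Let $G$ be an amenable (discrete) group, let $(X,u)$ and $(Y,v)$ be $G$-spaces, and assume $X$ is $G$-complemented in its bidual. Then every $G$-centralizer $\Omega:Y\curvearrowright X$ is at bounded distance from a $G$-equivariant quasi-linear map $\omega:Y_{00}\to X_\infty$ (defined on the same $Y_{00}$, with values in the same $X_\infty$). If moreover $\Omega$ is linear, then $\omega$ can be chosen linear.
   Context: Let $G$ be a semigroup. A $G$-space is a Banach space $X$ with a bounded action $g\mapsto u(g)\in\mathcal L(X)$ ($u(gh)=u(g)u(h)$, $\sup_g\|u(g)\|<\infty$). A linear map $T$ between $G$-spaces $(X,u)$, $(Y,v)$ is $G$-equivariant if $Tu(g)=v(g)T$ for all $g$. A quasi-linear map $\Omega:Y\curvearrowright X$ between $G$-spaces $(Y,v)$ and $(X,u)$ is a homogeneous map $\Omega:Y_{00}\to X_\infty$, where $Y_{00}\subseteq Y$ is a dense linear subspace with $v(g)Y_{00}\subseteq Y_{00}$ for all $g$, and $X_\infty\supseteq X$ is a vector space to which the action $u$ extends as an action by linear maps (still written $u(g)$), such that for some $C$ and all $y,y'\in Y_{00}$: $\Omega(y+y')-\Omega y-\Omega y'\in X$ and $\|\Omega(y+y')-\Omega y-\Omega y'\|_X\le C(\|y\|_Y+\|y'\|_Y)$. $\Omega$ is a $G$-centralizer if there is $C$ with $u(g)\Omega y-\Omega v(g)y\in X$ and $\|u(g)\Omega y-\Omega v(g)y\|_X\le C\|y\|_Y$ for all $g\in G$, $y\in Y_{00}$; it is $G$-equivariant if $u(g)\Omega y=\Omega v(g)y$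 for all $g\in G$, $y\in Y_{00}$. Two maps $\Omega_1,\Omega_2:Y_{00}\to X_\infty$ are at bounded distance (boundedly equivalent) if $\Omega_1y-\Omega_2y\in X$ and $\|\Omega_1y-\Omega_2y\|_X\le C\|y\|_Y$ for all $y\in Y_{00}$. A $G$-space $(X,u)$ is $G$-complemented in its bidual if there is a bounded linear projection $P$ of $X^{**}$ onto (the canonical copy of) $X$ with $Pu(g)^{**}=u(g)P$ for all $g\in G$. *)

From Stdlib Require Import Reals.
Open Scope R_scope.
Set Implicit Arguments.
Unset Strict Implicit.

Record VSpace := {
  vcar :> Type;
  vzero : vcar;
  vadd : vcar -> vcar -> vcar;
  vopp : vcar -> vcar;
  vscal : R -> vcar -> vcar;
  vadd_assoc : forall x y z, vadd x (vadd y z) = vadd (vadd x y) z;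
  vadd_comm : forall x y, vadd x y = vadd y x;
  vadd_0 : forall x, vadd x vzero = x;
  vadd_opp : forall x, vadd x (vopp x) = vzero;
  vscal_1 : forall x, vscal 1 x = x;
  vscal_assoc : forall a b x, vscal a (vscal b x) = vscal (a * b) x;
  vscal_distr_v : forall a x y, vscal a (vadd x y) = vadd (vscal a x) (vscal a y);
  vscal_distr_s : forall a b x, vscal (a + b) x = vadd (vscal a x) (vscal b x)
}.

Definition vsub (V : VSpace) (x y : V) : V := vadd x (vopp y).

Definition is_linear (V W : VSpace) (T : V -> W) : Prop :=
  (forall x y, T (vadd x y) = vadd (T x) (T y)) /\
  (forall a x, T (vscal a x) = vscal a (T x)).

Record Banach := {
  bvs :> VSpace;
  bnorm : bvs -> R;
  bnorm_nonneg : forall x, 0 <= bnorm x;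
  bnorm_sep : forall x, bnorm x = 0 -> x = vzero bvs;
  bnorm_triangle : forall x y, bnorm (vadd x y) <= bnorm x + bnorm y;
  bnorm_hom : forall a x, bnorm (vscal a x) = Rabs a * bnorm x;
  bcomplete : forall s : nat -> bvs,
    (forall eps, eps > 0 -> exists N, forall n m, (n >= N)%nat -> (m >= N)%nat ->
        bnorm (vsub (s n) (s m)) < eps) ->
    exists l, forall eps, eps > 0 -> exists N, forall n, (n >= N)%nat ->
        bnorm (vsub (s n) l) < eps
}.

Record Group := {
  gcar :> Type;
  gmul : gcar -> gcar -> gcar;
  gone : gcar;
  ginv : gcar -> gcar;
  gmul_assoc : forall a b c, gmul a (gmul b c) = gmul (gmul a b) c;
  gmul_1l : forall a, gmul gone a = a;
  gmul_1r : forall a, gmul a gone = a;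
  gmul_Vl : forall a, gmul (ginv a) a = gone;
  gmul_Vr : forall a, gmul a (ginv a) = gone
}.

Definition bounded_fun (G : Group) (f : G -> R) : Prop :=
  exists M, forall g, Rabs (f g) <= M.
Arguments bounded_fun {G} f.

Definition invariant_mean (G : Group) (m : (G -> R) -> R) : Prop :=
  (forall f h : G -> R, bounded_fun f -> bounded_fun h ->
     m (fun x => f x + h x) = m f + m h) /\
  (forall a (f : G -> R), bounded_fun f -> m (fun x => a * f x) = a * m f) /\
  (forall f : G -> R, bounded_fun f -> (forall x, 0 <= f x) -> 0 <= m f) /\
  m (fun _ => 1) = 1 /\
  (forall (g : G) (f : G -> R), bounded_fun f -> m (fun x => f (gmul g x)) = m f).

Definition amenable (G : Group) : Prop := exists m : (G -> R) -> R, invariant_mean m.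

Record GSpace (G : Group) := {
  gsp :> Banach;
  act : G -> gsp -> gsp;
  act_lin : forall g, is_linear (act g);
  act_mul : forall g h x, act (gmul g h) x = act g (act h x);
  act_bnd : exists M, forall g x, bnorm (act g x) <= M * bnorm x
}.

Definition op_bound (X : Banach) (f : X -> R) (K : R) : Prop :=
  forall x, Rabs (f x) <= K * bnorm x.

Record dual_el (X : Banach) := {
  dfun :> X -> R;
  dfun_lin : (forall x y, dfun (vadd x y) = dfun x + dfun y) /\
             (forall a x, dfun (vscal a x) = a * dfun x);
  dfun_bnd : exists K, op_bound dfun K
}.

(** Elements of X**: bounded linear functionals on X*.  Linearity is phrased
    pointwise; boundedness: |phi f| <= K * ||f||, where ||f|| is the inf of the
    bounds of f. *)
Record bidual_el (X : Banach) := {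
  bfun :> dual_el X -> R;
  bfun_add : forall f h k : dual_el X, (forall x, k x = f x + h x) ->
      bfun k = bfun f + bfun h;
  bfun_scal : forall a (f k : dual_el X), (forall x, k x = a * f x) ->
      bfun k = a * bfun f;
  bfun_bnd : exists K, 0 <= K /\
      forall (f : dual_el X) L, 0 <= L -> op_bound f L -> Rabs (bfun f) <= K * L
}.

Definition G_complemented_in_bidual (G : Group) (X : GSpace G) : Prop :=
  exists P : bidual_el X -> X,
    (forall phi psi chi : bidual_el X, (forall f, chi f = phi f + psi f) ->
        P chi = vadd (P phi) (P psi)) /\
    (forall a (phi chi : bidual_el X), (forall f, chi f = a * phi f) ->
        P chi = vscal a (P phi)) /\
    (exists C, 0 <= C /\ forall (phi : bidual_el X) K, 0 <= K ->
        (forall (f : dual_el X) L, 0 <= L -> op_bound f L -> Rabs (phi f) <= K * L) ->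
        bnorm (P phi) <= C * K) /\
    (forall x (phi : bidual_el X), (forall f, phi f = f x) -> P phi = x) /\
    (* equivariance: P (u(g)** phi) = u(g) (P phi), with
       (u(g)** phi)(f) = phi (f o u(g)) *)
    (forall g (phi psi : bidual_el X),
        (forall f f' : dual_el X, (forall x, f' x = f (act g x)) -> psi f = phi f') ->
        P psi = act g (P phi)).

(** X_oo: a vector space containing X (via an injective linear map j) to
    which the action u extends as an action U by linear maps. *)
Definition action_extension (G : Group) (X : GSpace G) (Xinf : VSpace)
    (j : X -> Xinf) (U : G -> Xinf -> Xinf) : Prop :=
  is_linear j /\ (forall x y, j x = j y -> x = y) /\
  (forall g, is_linear (U g)) /\
  (forall g h z, U (gmul g h) z = U g (U h z)) /\
  (forall g x, U g (j x) = j (act g x)).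

Definition dense_inv_subspace (G : Group) (Y : GSpace G) (Y00 : Y -> Prop) : Prop :=
  Y00 (vzero Y) /\
  (forall y y', Y00 y -> Y00 y' -> Y00 (vadd y y')) /\
  (forall a y, Y00 y -> Y00 (vscal a y)) /\
  (forall y eps, eps > 0 -> exists y', Y00 y' /\ bnorm (vsub y y') < eps) /\
  (forall g y, Y00 y -> Y00 (act g y)).

Definition in_X_le (X : Banach) (Xinf : VSpace) (j : X -> Xinf) (z : Xinf) (c : R)
  : Prop := exists x, j x = z /\ bnorm x <= c.

Definition homogeneous_on (Y : Banach) (Xinf : VSpace) (Y00 : Y -> Prop)
    (O : Y -> Xinf) : Prop :=
  forall a y, Y00 y -> O (vscal a y) = vscal a (O y).

Definition quasi_linear (Y X : Banach) (Xinf : VSpace) (j : X -> Xinf)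
    (Y00 : Y -> Prop) (O : Y -> Xinf) : Prop :=
  homogeneous_on Y00 O /\
  exists C, forall y y', Y00 y -> Y00 y' ->
    in_X_le j (vsub (vsub (O (vadd y y')) (O y)) (O y'))
              (C * (bnorm y + bnorm y')).

Definition linear_on (Y : Banach) (Xinf : VSpace) (Y00 : Y -> Prop)
    (O : Y -> Xinf) : Prop :=
  homogeneous_on Y00 O /\
  forall y y', Y00 y -> Y00 y' -> O (vadd y y') = vadd (O y) (O y').

Definition G_centralizer (G : Group) (Y X : GSpace G) (Xinf : VSpace)
    (j : X -> Xinf) (U : G -> Xinf -> Xinf) (Y00 : Y -> Prop) (O : Y -> Xinf)
  : Prop :=
  exists C, forall g y, Y00 y ->
    in_X_le j (vsub (U g (O y)) (O (act g y))) (C * bnorm y).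

Definition G_equivariant_map (G : Group) (Y : GSpace G) (Xinf : VSpace)
    (U : G -> Xinf -> Xinf) (Y00 : Y -> Prop) (O : Y -> Xinf) : Prop :=
  forall g y, Y00 y -> U g (O y) = O (act g y).

Definition bounded_distance (Y X : Banach) (Xinf : VSpace) (j : X -> Xinf)
    (Y00 : Y -> Prop) (O1 O2 : Y -> Xinf) : Prop :=
  exists C, forall y, Y00 y -> in_X_le j (vsub (O1 y) (O2 y)) (C * bnorm y).

From Stdlib Require Import Reals Lra ClassicalEpsilon FunctionalExtensionality.
Open Scope R_scope.
Set Implicit Arguments.

(* For [y] in [Y00] the function [g |-> u(g) Ω(g^-1 y) - Ω(y)] takes values in [X] and is
   bounded by [K ||y||] because [Ω] is a G-centralizer.  Its invariant mean is a bounded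
   functional on [X*], i.e. an element of [X**], which the equivariant projection [P] brings
   back to some [D(y)] in [X] with [||D(y)|| <= K' ||y||].  Translation invariance of the
   mean turns the cocycle identity of the defect [u(g) Ω - Ω u(g)] into
   [D(h y) = u(h) D(y) + u(h) Ω(y) - Ω(h y)], so [ω = Ω + D] is G-equivariant and at bounded
   distance from [Ω].  Linearity of the mean and of [P] makes [D] homogeneous, and additive
   when [Ω] is linear. *)

Section VectorSpace.
Context {V : VSpace}.
Implicit Types a b c d : V.

Lemma vadd_0l a : vadd (vzero V) a = a.
Proof. rewrite vadd_comm; apply vadd_0. Qed.

Lemma vadd_cancel_r a b c : vadd a c = vadd b c -> a = b.
Proof.
  intro H. rewrite <- (vadd_0 a), <- (vadd_0 b), <- (vadd_opp c), !vadd_assoc, H.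
  reflexivity.
Qed.

Lemma vscal_0 a : vscal 0 a = vzero V.
Proof.
  apply (vadd_cancel_r _ _ (vscal 0 a)). rewrite vadd_0l, <- vscal_distr_s.
  f_equal; ring.
Qed.

Lemma vopp_scal a : vopp a = vscal (-1) a.
Proof.
  apply (vadd_cancel_r _ _ a). rewrite (vadd_comm (vopp a)), vadd_opp.
  rewrite <- (vscal_1 a) at 2. rewrite <- vscal_distr_s.
  replace (-1 + 1) with 0 by ring. symmetry; apply vscal_0.
Qed.

Lemma vopp_add a b : vopp (vadd a b) = vadd (vopp a) (vopp b).
Proof. rewrite !vopp_scal. apply vscal_distr_v. Qed.

Lemma vopp_0 : vopp (vzero V) = vzero V.
Proof. rewrite <- (vadd_0l (vopp (vzero V))). apply vadd_opp. Qed.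

Lemma vsub_self a : vsub a a = vzero V.
Proof. apply vadd_opp. Qed.

Lemma vsub_0 a : vsub a (vzero V) = a.
Proof. unfold vsub. rewrite vopp_0. apply vadd_0. Qed.

Lemma vadd_ACA a b c d : vadd (vadd a b) (vadd c d) = vadd (vadd a c) (vadd b d).
Proof.
  rewrite <- !vadd_assoc. f_equal. rewrite !vadd_assoc. f_equal. apply vadd_comm.
Qed.

Lemma vsub_add a a' b b' : vsub (vadd a a') (vadd b b') = vadd (vsub a b) (vsub a' b').
Proof. unfold vsub. rewrite vopp_add. apply vadd_ACA. Qed.

Lemma vscal_sub r a b : vscal r (vsub a b) = vsub (vscal r a) (vscal r b).
Proof.
  unfold vsub. rewrite vscal_distr_v, !vopp_scal, !vscal_assoc. do 2 f_equal. ring.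
Qed.

Lemma vsubKl a b : vadd b (vsub a b) = a.
Proof.
  unfold vsub. rewrite vadd_assoc, (vadd_comm b a), <- vadd_assoc, vadd_opp. apply vadd_0.
Qed.

Lemma vsub_add_sub a b c : vadd (vsub a b) (vsub b c) = vsub a c.
Proof.
  unfold vsub. rewrite <- vadd_assoc, (vadd_assoc (vopp b) b), (vadd_comm (vopp b) b),
    vadd_opp, vadd_0l.
  reflexivity.
Qed.

Lemma vsub_addKl a b c : vadd (vsub a b) (vadd b c) = vadd a c.
Proof. rewrite vadd_assoc. f_equal. rewrite vadd_comm. apply vsubKl. Qed.

Lemma vsub_addKr a b : vsub a (vadd a b) = vopp b.
Proof. unfold vsub. rewrite vopp_add, vadd_assoc, vadd_opp. apply vadd_0l. Qed.

Lemma vadd_subKC a b c : vadd a (vadd b (vsub c a)) = vadd c b.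
Proof. rewrite (vadd_comm b), vadd_assoc, vsubKl. reflexivity. Qed.
End VectorSpace.

Section LinearMap.
Context {V W : VSpace} (T : V -> W).
Hypothesis T_lin : is_linear T.

Lemma linD a b : T (vadd a b) = vadd (T a) (T b).
Proof. apply (proj1 T_lin). Qed.

Lemma linZ r a : T (vscal r a) = vscal r (T a).
Proof. apply (proj2 T_lin). Qed.

Lemma linN a : T (vopp a) = vopp (T a).
Proof. rewrite !vopp_scal. apply linZ. Qed.

Lemma linB a b : T (vsub a b) = vsub (T a) (T b).
Proof. unfold vsub. rewrite linD, linN. reflexivity. Qed.
End LinearMap.

Lemma bnormN {X : Banach} (x : X) : bnorm (vopp x) = bnorm x.
Proof.
  rewrite vopp_scal, bnorm_hom. replace (Rabs (-1)) with 1 by (rewrite Rabs_left; lra).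
  ring.
Qed.

Lemma bnorm_sub {X : Banach} (x y : X) : bnorm (vsub x y) <= bnorm x + bnorm y.
Proof. unfold vsub. rewrite <- (bnormN y). apply bnorm_triangle. Qed.

Lemma Rle_mul_chain u v w C M :
  0 <= v -> 0 <= w -> u <= C * v -> v <= M * w -> u <= Rabs C * Rabs M * w.
Proof.
  intros Hv Hw Hu HvM.
  assert (HC := Rle_abs C). assert (HM := Rle_abs M).
  assert (HC0 := Rabs_pos C). assert (HM0 := Rabs_pos M).
  assert (v <= Rabs M * w) by nra. nra.
Qed.

Lemma act_act {G : Group} {Z : GSpace G} (g h : G) (z : Z) :
  act g (act h z) = act (gmul g h) z.
Proof. symmetry. apply act_mul. Qed.

Lemma ginv_mulK {G : Group} (h k : G) : gmul (ginv (gmul h k)) h = ginv k.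
Proof.
  assert (E : gmul (gmul (ginv (gmul h k)) h) k = gone G).
  { rewrite <- gmul_assoc. apply gmul_Vl. }
  rewrite <- (gmul_1r (gmul (ginv (gmul h k)) h)), <- (gmul_Vr k), gmul_assoc, E.
  apply gmul_1l.
Qed.

Section InvariantMean.
Context {G : Group} {m : (G -> R) -> R} (Hm : invariant_mean m).

Lemma mean_ext (f h : G -> R) : (forall g, f g = h g) -> m f = m h.
Proof. intro E. f_equal. apply functional_extensionality. exact E. Qed.

Lemma meanD (f h : G -> R) :
  bounded_fun f -> bounded_fun h -> m (fun g => f g + h g) = m f + m h.
Proof. apply (proj1 Hm). Qed.

Lemma meanZ r (f : G -> R) : bounded_fun f -> m (fun g => r * f g) = r * m f.
Proof. apply (proj1 (proj2 Hm)). Qed.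

Lemma mean_ge0 (f : G -> R) : bounded_fun f -> (forall g, 0 <= f g) -> 0 <= m f.
Proof. apply (proj1 (proj2 (proj2 Hm))). Qed.

Lemma mean_translate h (f : G -> R) : bounded_fun f -> m (fun g => f (gmul h g)) = m f.
Proof. apply (proj2 (proj2 (proj2 (proj2 Hm)))). Qed.

Lemma bounded_fun_cst (r : R) : bounded_fun (fun _ : G => r).
Proof. exists (Rabs r). intro; apply Rle_refl. Qed.

Lemma mean_cst r : m (fun _ => r) = r.
Proof.
  rewrite (mean_ext (fun _ => r) (fun _ => r * 1)) by (intro; ring).
  rewrite meanZ by apply bounded_fun_cst.
  rewrite (proj1 (proj2 (proj2 (proj2 Hm)))). ring.
Qed.

Lemma mean_abs_le (f : G -> R) B : (forall g, Rabs (f g) <= B) -> Rabs (m f) <= B.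
Proof.
  intro HB.
  assert (Hf : bounded_fun f) by (exists B; exact HB).
  assert (Hshift : forall s, m (fun g => B + s * f g) = B + s * m f).
  { intro s. rewrite (meanD (f := fun _ => B) (h := fun g => s * f g)), mean_cst, meanZ; auto.
    - apply bounded_fun_cst.
    - destruct Hf as [M HM]. exists (Rabs s * M). intro g. rewrite Rabs_mult.
      apply Rmult_le_compat_l; [apply Rabs_pos | apply HM]. }
  assert (Hpos : forall s, Rabs s <= 1 -> 0 <= m (fun g => B + s * f g)).
  { intros s Hs. apply mean_ge0.
    - destruct Hf as [M HM]. exists (Rabs B + M). intro g.
      eapply Rle_trans; [apply Rabs_triang|]. rewrite Rabs_mult.
      specialize (HM g). assert (0 <= Rabs (f g)) by apply Rabs_pos. nra.
    - intro g. specialize (HB g). assert (HR := Rle_abs (- (s * f g))).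
      rewrite Rabs_Ropp, Rabs_mult in HR. assert (0 <= Rabs (f g)) by apply Rabs_pos.
      nra. }
  assert (H1 := Hpos 1 ltac:(rewrite Rabs_R1; lra)).
  assert (H2 := Hpos (-1) ltac:(rewrite Rabs_left; lra)).
  rewrite Hshift in H1, H2. apply Rabs_le. lra.
Qed.

Section MeanOfBoundedMap.
Context {X : Banach} {c : G -> X} {B : R} (c_le : forall g, bnorm (c g) <= B).

Lemma bounded_fun_dual (f : dual_el X) : bounded_fun (fun g => f (c g)).
Proof.
  destruct (dfun_bnd f) as [K HK]. exists (Rabs K * Rabs B * 1). intro g.
  apply (Rle_mul_chain (v := bnorm (c g))); try lra; [apply bnorm_nonneg | apply HK |].
  rewrite Rmult_1_r. apply c_le.
Qed.

Lemma mean_dual_le {f : dual_el X} {L} :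
  0 <= L -> op_bound f L -> Rabs (m (fun g => f (c g))) <= B * L.
Proof.
  intros HL Hf. apply mean_abs_le. intro g. eapply Rle_trans; [apply Hf|].
  rewrite Rmult_comm. apply Rmult_le_compat_r; auto.
Qed.

Lemma bound_ge0 : 0 <= B.
Proof. eapply Rle_trans; [apply bnorm_nonneg | apply (c_le (gone G))]. Qed.

Definition mean_bidual : bidual_el X.
Proof.
  refine {| bfun := fun f => m (fun g => f (c g)) |}.
  - intros f h k Hk. rewrite <- meanD by apply bounded_fun_dual.
    apply mean_ext. intro g. apply Hk.
  - intros r f k Hk. rewrite <- meanZ by apply bounded_fun_dual.
    apply mean_ext. intro g. apply Hk.
  - exists B. split; [exact bound_ge0 | exact @mean_dual_le].
Defined.
End MeanOfBoundedMap.
End InvariantMean.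

(* The body of [G_complemented_in_bidual X], named so that [P] can be a section variable. *)
Definition equivariant_bidual_projection {G : Group} {X : GSpace G}
    (P : bidual_el X -> X) : Prop :=
  (forall phi psi chi : bidual_el X, (forall f, chi f = phi f + psi f) ->
      P chi = vadd (P phi) (P psi)) /\
  (forall a (phi chi : bidual_el X), (forall f, chi f = a * phi f) ->
      P chi = vscal a (P phi)) /\
  (exists C, 0 <= C /\ forall (phi : bidual_el X) K, 0 <= K ->
      (forall (f : dual_el X) L, 0 <= L -> op_bound f L -> Rabs (phi f) <= K * L) ->
      bnorm (P phi) <= C * K) /\
  (forall x (phi : bidual_el X), (forall f, phi f = f x) -> P phi = x) /\
  (forall g (phi psi : bidual_el X),
      (forall f f' : dual_el X, (forall x, f' x = f (act g x)) -> psi f = phi f') ->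
      P psi = act g (P phi)).

Definition bounded_map {G : Group} {X : Banach} (c : G -> X) : Prop :=
  exists B, forall g, bnorm (c g) <= B.

Lemma bounded_map_cst {G : Group} {X : Banach} (x : X) : bounded_map (fun _ : G => x).
Proof. exists (bnorm x). intro; apply Rle_refl. Qed.

Lemma bounded_map_act {G : Group} {X : GSpace G} h (c : G -> X) :
  bounded_map c -> bounded_map (fun g => act h (c g)).
Proof.
  intros [B HB]. destruct (act_bnd X) as [M HM]. exists (Rabs M * Rabs B * 1). intro g.
  apply (Rle_mul_chain (v := bnorm (c g))); try lra; auto using bnorm_nonneg.
  rewrite Rmult_1_r. apply HB.
Qed.

Section Average.
Context {G : Group} {X : GSpace G} {m : (G -> R) -> R} (Hm : invariant_mean m)
  {P : bidual_el X -> X} (HP : equivariant_bidual_projection P).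

Lemma P_ext (phi psi : bidual_el X) : (forall f, phi f = psi f) -> P phi = P psi.
Proof.
  intro E. rewrite ((proj1 (proj2 HP)) 1 psi phi), vscal_1; [reflexivity|].
  intro f. rewrite E. ring.
Qed.

Definition average (c : G -> X) : X :=
  match excluded_middle_informative (bounded_map c) with
  | left Hc => let (B, HB) := constructive_indefinite_description _ Hc in
               P (mean_bidual Hm HB)
  | right _ => vzero X
  end.

Lemma average_eq {c : G -> X} {B} (HB : forall g, bnorm (c g) <= B) :
  average c = P (mean_bidual Hm HB).
Proof.
  unfold average. destruct excluded_middle_informative as [Hc | Hc].
  - destruct constructive_indefinite_description. apply P_ext. reflexivity.
  - exfalso. apply Hc. exists B. exact HB.
Qed.

Lemma average_ext (c c' : G -> X) : (forall g, c g = c' g) -> average c = average c'.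
Proof. intro E. f_equal. apply functional_extensionality. exact E. Qed.

Lemma average_bounded : exists C, 0 <= C /\
  forall (c : G -> X) B, (forall g, bnorm (c g) <= B) -> bnorm (average c) <= C * B.
Proof.
  destruct (proj1 (proj2 (proj2 HP))) as [C [HC HPb]].
  exists C. split; [exact HC|]. intros c B HB. rewrite (average_eq HB).
  apply HPb; [exact (bound_ge0 HB)|]. intros f L HL Hf. exact (mean_dual_le Hm HB HL Hf).
Qed.

Lemma dualD (f : dual_el X) x y : f (vadd x y) = f x + f y.
Proof. apply (proj1 (dfun_lin f)). Qed.

Lemma dualZ (f : dual_el X) r x : f (vscal r x) = r * f x.
Proof. apply (proj2 (dfun_lin f)). Qed.

Lemma averageD (c c' : G -> X) : bounded_map c -> bounded_map c' ->
  average (fun g => vadd (c g) (c' g)) = vadd (average c) (average c').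
Proof.
  intros [B HB] [B' HB'].
  assert (HBB' : forall g, bnorm (vadd (c g) (c' g)) <= B + B').
  { intro g. eapply Rle_trans; [apply bnorm_triangle|]. apply Rplus_le_compat; auto. }
  rewrite (average_eq HBB'), (average_eq HB), (average_eq HB').
  apply (proj1 HP). intro f. cbn. rewrite <- (meanD Hm) by (eapply bounded_fun_dual; eauto).
  apply mean_ext. intro g. apply dualD.
Qed.

Lemma averageZ r (c : G -> X) : bounded_map c ->
  average (fun g => vscal r (c g)) = vscal r (average c).
Proof.
  intros [B HB].
  assert (HrB : forall g, bnorm (vscal r (c g)) <= Rabs r * B).
  { intro g. rewrite bnorm_hom. apply Rmult_le_compat_l; [apply Rabs_pos | apply HB]. }
  rewrite (average_eq HrB), (average_eq HB).
  apply (proj1 (proj2 HP)). intro f. cbn. rewrite <- (meanZ Hm) by (eapply bounded_fun_dual; eauto).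
  apply mean_ext. intro g. apply dualZ.
Qed.

Lemma average_cst x : average (fun _ => x) = x.
Proof.
  rewrite (average_eq (fun _ => Rle_refl (bnorm x))).
  apply (proj1 (proj2 (proj2 (proj2 HP)))). intro f. cbn. apply mean_cst, Hm.
Qed.

Lemma average_translate h (c : G -> X) : bounded_map c ->
  average (fun g => c (gmul h g)) = average c.
Proof.
  intros [B HB].
  rewrite (average_eq (fun g => HB (gmul h g))), (average_eq HB).
  apply P_ext. intro f. cbn. apply (mean_translate Hm h (f := fun g => f (c g))). eapply bounded_fun_dual; eauto.
Qed.

Lemma average_act h (c : G -> X) : bounded_map c ->
  average (fun g => act h (c g)) = act h (average c).
Proof.
  intros [B HB]. destruct (act_bnd X) as [M HM].
  assert (HMB : forall g, bnorm (act h (c g)) <= Rabs M * Rabs B * 1).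
  { intro g. apply (Rle_mul_chain (v := bnorm (c g))); try lra; auto using bnorm_nonneg.
    rewrite Rmult_1_r. apply HB. }
  rewrite (average_eq HMB), (average_eq HB).
  apply (proj2 (proj2 (proj2 (proj2 HP)))). intros f f' Hf'. cbn.
  apply mean_ext. intro g. symmetry. apply Hf'.
Qed.
End Average.

Section PartialInverse.
Context {X Xinf : VSpace} (j : X -> Xinf).

Definition unembed (z : Xinf) : X :=
  match excluded_middle_informative (exists x, j x = z) with
  | left H => proj1_sig (constructive_indefinite_description _ H)
  | right _ => vzero X
  end.

Lemma embed_unembed z : (exists x, j x = z) -> j (unembed z) = z.
Proof.
  intro H. unfold unembed. destruct excluded_middle_informative as [H' | H'].
  - exact (proj2_sig (constructive_indefinite_description _ H')).
  - contradiction.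
Qed.
End PartialInverse.

Section EquivariantCorrection.
Context {G : Group} {X Y : GSpace G} {Xinf : VSpace} {j : X -> Xinf}
  {U : G -> Xinf -> Xinf} {Y00 : Y -> Prop} {Omega : Y -> Xinf}.
Hypotheses (Hext : action_extension j U) (HY : dense_inv_subspace Y00)
  (HOc : G_centralizer j U Y00 Omega).

Let j_lin : is_linear j := proj1 Hext.
Let j_inj : forall x x', j x = j x' -> x = x' := proj1 (proj2 Hext).
Let U_lin : forall g, is_linear (U g) := proj1 (proj2 (proj2 Hext)).
Let U_mul : forall g h z, U (gmul g h) z = U g (U h z) := proj1 (proj2 (proj2 (proj2 Hext))).
Let U_j : forall g x, U g (j x) = j (act g x) := proj2 (proj2 (proj2 (proj2 Hext))).
Let Y00_add : forall y y', Y00 y -> Y00 y' -> Y00 (vadd y y') := proj1 (proj2 HY).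
Let Y00_scal : forall a y, Y00 y -> Y00 (vscal a y) := proj1 (proj2 (proj2 HY)).
Let Y00_act : forall g y, Y00 y -> Y00 (act g y) := proj2 (proj2 (proj2 (proj2 HY))).

Definition defect (g : G) (y : Y) : Xinf := vsub (U g (Omega y)) (Omega (act g y)).

Lemma defect_cocycle g h y :
  defect (gmul g h) y = vadd (U g (defect h y)) (defect g (act h y)).
Proof.
  unfold defect. rewrite U_mul, act_mul, (linB (U_lin g)). symmetry. apply vsub_add_sub.
Qed.

Lemma U1_defect1_act h y : U (gone G) (defect (gone G) (act h y)) = vzero Xinf.
Proof.
  unfold defect. rewrite (linB (U_lin _)), <- U_mul, gmul_1l, act_act, gmul_1l.
  apply vsub_self.
Qed.

(* When [u(e)] is the identity this is [u(g) Ω(g^-1 y) - Ω(y)]; in general the second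
   term is needed for the cocycle identity below. *)
Definition orbit_defect (y : Y) (g : G) : Xinf :=
  vsub (defect g (act (ginv g) y)) (U (gone G) (defect (gone G) y)).

Lemma orbit_defect_cocycle h k y :
  orbit_defect (act h y) (gmul h k) = vadd (U h (orbit_defect y k)) (defect h y).
Proof.
  assert (Eh : defect h y = vadd (U h (defect (gone G) y)) (defect h (act (gone G) y))).
  { rewrite <- defect_cocycle, gmul_1r. reflexivity. }
  unfold orbit_defect.
  rewrite U1_defect1_act, vsub_0, act_act, ginv_mulK, defect_cocycle, act_act, gmul_Vr.
  rewrite (linB (U_lin h)), <- U_mul, gmul_1r, Eh. symmetry. apply vsub_addKl.
Qed.

Lemma orbit_defect_in_X : exists K, 0 <= K /\ forall y g, Y00 y ->
  exists x, j x = orbit_defect y g /\ bnorm x <= K * bnorm y.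
Proof.
  destruct HOc as [C HC]. destruct (act_bnd X) as [MX HMX]. destruct (act_bnd Y) as [MY HMY].
  exists (Rabs C * Rabs MY + Rabs MX * Rabs C). split.
  { assert (H1 := Rabs_pos C). assert (H2 := Rabs_pos MX). assert (H3 := Rabs_pos MY). nra. }
  intros y g Hy.
  destruct (HC g (act (ginv g) y) (Y00_act _ Hy)) as [x1 [E1 N1]].
  destruct (HC (gone G) y Hy) as [x2 [E2 N2]].
  exists (vsub x1 (act (gone G) x2)). split.
  - rewrite (linB j_lin), <- U_j, E1, E2. reflexivity.
  - assert (N1' : bnorm x1 <= Rabs C * Rabs MY * bnorm y).
    { apply (Rle_mul_chain (v := bnorm (act (ginv g) y))); auto using bnorm_nonneg. }
    assert (N2' : bnorm (act (gone G) x2) <= Rabs MX * Rabs C * bnorm y).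
    { apply (Rle_mul_chain (v := bnorm x2)); auto using bnorm_nonneg. }
    eapply Rle_trans; [apply bnorm_sub | lra].
Qed.

Definition orbit_defectX (y : Y) (g : G) : X := unembed j (orbit_defect y g).

Lemma orbit_defectX_spec y g : Y00 y -> j (orbit_defectX y g) = orbit_defect y g.
Proof.
  intro Hy. apply embed_unembed. destruct orbit_defect_in_X as [K [_ HK]].
  destruct (HK y g Hy) as [x [Ex _]]. exists x. exact Ex.
Qed.

Lemma orbit_defectX_unique {y g x} : Y00 y -> j x = orbit_defect y g -> orbit_defectX y g = x.
Proof. intros Hy Ex. apply j_inj. rewrite orbit_defectX_spec, Ex; auto. Qed.

Lemma orbit_defectX_le : exists K, 0 <= K /\ forall y g, Y00 y ->
  bnorm (orbit_defectX y g) <= K * bnorm y.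
Proof.
  destruct orbit_defect_in_X as [K [HK0 HK]]. exists K. split; [exact HK0|].
  intros y g Hy. destruct (HK y g Hy) as [x [Ex Nx]].
  rewrite (orbit_defectX_unique Hy Ex). exact Nx.
Qed.

Lemma bounded_orbit_defectX y : Y00 y -> bounded_map (orbit_defectX y).
Proof.
  intro Hy. destruct orbit_defectX_le as [K [_ HK]]. exists (K * bnorm y). auto.
Qed.

Definition defectX (g : G) (y : Y) : X := unembed j (defect g y).

Lemma defectX_spec g y : Y00 y -> j (defectX g y) = defect g y.
Proof.
  intro Hy. apply embed_unembed. destruct HOc as [C HC].
  destruct (HC g y Hy) as [x [Ex _]]. exists x. exact Ex.
Qed.

Section Homogeneity.
Hypothesis HOhom : homogeneous_on Y00 Omega.

Lemma defectZ g a y : Y00 y -> defect g (vscal a y) = vscal a (defect g y).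
Proof.
  intro Hy. unfold defect.
  rewrite (linZ (act_lin _ _)), !HOhom, (linZ (U_lin g)), vscal_sub; auto.
Qed.

Lemma orbit_defectXZ a y g : Y00 y ->
  orbit_defectX (vscal a y) g = vscal a (orbit_defectX y g).
Proof.
  intro Hy. apply orbit_defectX_unique; [auto|].
  rewrite (linZ j_lin), orbit_defectX_spec by exact Hy. unfold orbit_defect.
  rewrite (linZ (act_lin _ _)), !defectZ, (linZ (U_lin _)), vscal_sub; auto.
Qed.
End Homogeneity.

Section Additivity.
Hypothesis HOlin : linear_on Y00 Omega.

Lemma defectD g y y' : Y00 y -> Y00 y' ->
  defect g (vadd y y') = vadd (defect g y) (defect g y').
Proof.
  intros Hy Hy'. destruct HOlin as [_ OD]. unfold defect.
  rewrite (linD (act_lin _ _)), !OD, (linD (U_lin g)), vsub_add; auto.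
Qed.

Lemma orbit_defectXD y y' g : Y00 y -> Y00 y' ->
  orbit_defectX (vadd y y') g = vadd (orbit_defectX y g) (orbit_defectX y' g).
Proof.
  intros Hy Hy'. apply orbit_defectX_unique; [auto|].
  rewrite (linD j_lin), !orbit_defectX_spec by assumption. unfold orbit_defect.
  rewrite (linD (act_lin _ _)), !defectD, (linD (U_lin _)), vsub_add; auto.
Qed.
End Additivity.

Context {m : (G -> R) -> R} (Hm : invariant_mean m) {P : bidual_el X -> X}
  (HP : equivariant_bidual_projection P).

Definition correction (y : Y) : X := average Hm (P := P) (orbit_defectX y).

Definition omega (y : Y) : Xinf := vadd (Omega y) (j (correction y)).

Lemma correction_le : exists K, 0 <= K /\ forall y, Y00 y ->
  bnorm (correction y) <= K * bnorm y.
Proof.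
  destruct (average_bounded Hm HP) as [Cp [HCp HA]].
  destruct orbit_defectX_le as [K [HK0 HK]].
  exists (Cp * K). split; [nra|]. intros y Hy. rewrite Rmult_assoc. apply HA. auto.
Qed.

Lemma correction_equivariant h y : Y00 y ->
  correction (act h y) = vadd (act h (correction y)) (defectX h y).
Proof.
  intro Hy. unfold correction.
  rewrite <- (average_translate Hm HP h) by auto using bounded_orbit_defectX.
  rewrite (average_ext Hm _ (fun k => vadd (act h (orbit_defectX y k)) (defectX h y))).
  - rewrite averageD, average_act, average_cst;
      auto using bounded_map_act, bounded_map_cst, bounded_orbit_defectX.
  - intro k. apply orbit_defectX_unique; [auto|].
    rewrite (linD j_lin), <- U_j, orbit_defectX_spec, defectX_spec, orbit_defect_cocycle;
      auto.
Qed.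
Lemma correctionZ a y : homogeneous_on Y00 Omega -> Y00 y ->
  correction (vscal a y) = vscal a (correction y).
Proof.
  intros HOhom Hy. unfold correction.
  rewrite (average_ext Hm _ (fun g => vscal a (orbit_defectX y g))).
  - apply averageZ; auto using bounded_orbit_defectX.
  - intro g. apply orbit_defectXZ; assumption.
Qed.

Lemma correctionD y y' : linear_on Y00 Omega -> Y00 y -> Y00 y' ->
  correction (vadd y y') = vadd (correction y) (correction y').
Proof.
  intros HOlin Hy Hy'. unfold correction.
  rewrite (average_ext Hm _ (fun g => vadd (orbit_defectX y g) (orbit_defectX y' g))).
  - apply averageD; auto using bounded_orbit_defectX.
  - intro g. apply orbit_defectXD; assumption.
Qed.

Lemma omega_homogeneous : homogeneous_on Y00 Omega -> homogeneous_on Y00 omega.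
Proof.
  intros HOhom a y Hy. unfold omega.
  rewrite HOhom, correctionZ, (linZ j_lin), vscal_distr_v; auto.
Qed.

Lemma omega_quasi_linear : quasi_linear j Y00 Omega -> quasi_linear j Y00 omega.
Proof.
  intros [HOhom [Cq HCq]]. split; [exact (omega_homogeneous HOhom)|].
  destruct correction_le as [K [HK0 HK]].
  exists (Cq + 2 * K). intros y y' Hy Hy'.
  destruct (HCq y y' Hy Hy') as [x [Ex Nx]].
  exists (vadd x (vsub (vsub (correction (vadd y y')) (correction y)) (correction y'))).
  split.
  - unfold omega. rewrite !vsub_add, (linD j_lin), !(linB j_lin), Ex. reflexivity.
  - assert (Nyy' := HK _ (Y00_add Hy Hy')).
    assert (Ny := HK _ Hy). assert (Ny' := HK _ Hy').
    assert (Tyy' := bnorm_triangle y y').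
    assert (n := bnorm_nonneg y). assert (n' := bnorm_nonneg y').
    eapply Rle_trans; [apply bnorm_triangle|].
    eapply Rle_trans; [apply Rplus_le_compat_l; eapply Rle_trans;
      [apply bnorm_sub | apply Rplus_le_compat_r, bnorm_sub]|].
    nra.
Qed.

Lemma omega_equivariant : G_equivariant_map U Y00 omega.
Proof.
  intros h y Hy. unfold omega.
  rewrite correction_equivariant, (linD (U_lin h)), U_j, !(linD j_lin), defectX_spec by exact Hy.
  unfold defect. symmetry. apply vadd_subKC.
Qed.

Lemma omega_bounded_distance : bounded_distance j Y00 Omega omega.
Proof.
  destruct correction_le as [K [_ HK]]. exists K. intros y Hy.
  exists (vopp (correction y)). split.
  - unfold omega. rewrite vsub_addKr, (linN j_lin). reflexivity.
  - rewrite bnormN. auto.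
Qed.

Lemma omega_linear : linear_on Y00 Omega -> linear_on Y00 omega.
Proof.
  intros [HOhom HOadd]. split; [exact (omega_homogeneous HOhom)|].
  intros y y' Hy Hy'. unfold omega.
  rewrite HOadd, correctionD, (linD j_lin), vadd_ACA; auto. split; assumption.
Qed.
End EquivariantCorrection.

Theorem mainTheorem2 (G : Group) (X Y : GSpace G) (Xinf : VSpace)
  (j : X -> Xinf) (U : G -> Xinf -> Xinf) (Y00 : Y -> Prop) (Omega : Y -> Xinf) :
  amenable G ->
  G_complemented_in_bidual X ->
  action_extension j U ->
  dense_inv_subspace Y00 ->
  quasi_linear j Y00 Omega ->
  G_centralizer j U Y00 Omega ->
  (exists omega : Y -> Xinf,
     quasi_linear j Y00 omega /\ G_equivariant_map U Y00 omega /\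
     bounded_distance j Y00 Omega omega) /\
  (linear_on Y00 Omega ->
   exists omega : Y -> Xinf,
     linear_on Y00 omega /\ quasi_linear j Y00 omega /\
     G_equivariant_map U Y00 omega /\ bounded_distance j Y00 Omega omega).
Proof.
  intros [m Hm] [P HP] Hext HY HOq HOc.
  pose proof (omega_quasi_linear Hext HY HOc Hm HP HOq) as Hq.
  pose proof (omega_equivariant Hext HY HOc Hm HP) as He.
  pose proof (omega_bounded_distance Hext HY HOc Hm HP) as Hd.
  split.
  - eexists. exact (conj Hq (conj He Hd)).
  - intro HOlin. eexists.
    exact (conj (omega_linear Hext HY HOc Hm HP HOlin) (conj Hq (conj He Hd))).
Qed.
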